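(* Let $G=(V,E)$ be a graph and, for each $(u,v)\in E$, let $\mathcal P_{u,v}$ be the set of stretch-$k$ paths from $u$ to $v$. A vector $\mathbf x\in\mathbb R^{E}$ is feasible for $\text{LP}_{Spanner}$ if and only if there exist values $f_P$ for each $(u,v)\in E$ and $P\in\mathcal P_{u,v}$ such that $(\mathbf x,\mathbf f)$ is feasible for $\text{LP}^{Flow}_{Spanner}$.
   Context: $\text{LP}^{Flow}_{Spanner}$ has variables $x_e$ ($e\in E$) and $f_P$ ($(u,v)\in E$, $P\in\mathcal P_{u,v}$) and constraints: $\sum_{P\in\mathcal P_{u,v}:e\in P}f_P\le x_e$ for all $(u,v)\in E$ and $e\in E$; $\sum_{P\in\mathcal P_{u,v}}f_P\ge1$ for all $(u,v)\in E$; $x_e\ge0$; $f_P\ge0$ (objective $\min\sum_e x_e$). With $\mathcal Z^{u,v}=\{\mathbf z\in[0,1]^{E}:\sum_{e\in P}z_e\ge1\ \forall P\in\mathcal P_{u,v}\}$, $\text{LP}_{Spanner}$ has variables $x_e$ ($e\in E$) and constraints $\sum_{e\in E}z_ex_e\ge1$ for all $(u,v)\in E$ and all $\mathbf z\in\mathcal Z^{u,v}$, and $x_e\ge0$ for all $e\in E$ (objective $\min\sum_e x_e$). A stretch-$k$ path from $u$ to $v$ is a $u$-to-$v$ path in $G$ of length at most $k\cdot d_G(u,v)$. *)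

From HB Require Import structures.
From mathcomp Require Import all_boot all_order all_algebra.
Set Implicit Arguments. Unset Strict Implicit. Unset Printing Implicit Defensive.
Import Order.TTheory GRing.Theory Num.Theory.
Local Open Scope ring_scope.

Section Spanner.
Variables (V : finType) (E : {set V * V}).

Definition pedges (p : seq V) : seq (V * V) := zip p (behead p).

Definition plen (p : seq V) : nat := (size p).-1.

Definition is_path (u v : V) (p : seq V) : bool :=
  [&& p != [::], head u p == u, last u p == v, uniq p &
      all (fun e => e \in E) (pedges p)].

(* All duplicate-free vertex sequences (a finite superset of all simple paths). *)
Definition all_useqs : seq (seq V) :=
  undup (flatten [seq [seq tval t | t : i.-tuple V] | i <- iota 0 #|V|.+1]).

(* Hop distance d_G(u,v): minimum length of a u-v path (= #|V| if none). *)
Definition dist (u v : V) : nat :=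
  \big[minn/#|V|]_(p <- all_useqs | is_path u v p) plen p.

Definition stretch_paths (R : numDomainType) (k : R) (u v : V) : seq (seq V) :=
  [seq p <- all_useqs | is_path u v p && ((plen p)%:R <= k * (dist u v)%:R)].

(* Feasibility for LP^Flow_Spanner, with f (u,v) P the variable f_P. *)
Definition LP_flow_feasible (R : numDomainType) (k : R)
    (x : V * V -> R) (f : V * V -> seq V -> R) : Prop :=
  [/\ (forall uv, uv \in E -> forall e, e \in E ->
         \sum_(P <- stretch_paths k uv.1 uv.2 | e \in pedges P) f uv P <= x e),
      (forall uv, uv \in E -> 1 <= \sum_(P <- stretch_paths k uv.1 uv.2) f uv P),
      (forall e, e \in E -> 0 <= x e) &
      (forall uv, uv \in E -> forall P, P \in stretch_paths k uv.1 uv.2 -> 0 <= f uv P)].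

Definition in_Z (R : numDomainType) (k : R) (u v : V) (z : V * V -> R) : Prop :=
  (forall e, e \in E -> 0 <= z e <= 1) /\
  (forall P, P \in stretch_paths k u v -> 1 <= \sum_(e <- pedges P) z e).

Definition LP_spanner_feasible (R : numDomainType) (k : R) (x : V * V -> R) : Prop :=
  (forall uv, uv \in E -> forall z, in_Z k uv.1 uv.2 z ->
      1 <= \sum_(e in E) z e * x e) /\
  (forall e, e \in E -> 0 <= x e).

End Spanner.

(* For each edge (u,v) the two LPs are linked by LP duality between fractional
   packings of stretch-k u-v paths of value 1 under the capacities x (the flow
   f) and fractional covers z of those paths (the set Z^{u,v}).  A packing
   makes every cover cost at least 1 by exchanging the two summations.
   Conversely, if no packing exists, Farkas' lemma (obtained by
   Fourier-Motzkin elimination) yields edge weights mu and a scalar nu with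
   sum_e mu_e x_e < nu while every path has mu-weight at least nu; the
   clipped weights z = min(mu/nu, 1) then form a cover of cost below 1.  The
   clipping is why the bound z <= 1 in Z^{u,v} does not matter. *)

From mathcomp Require Import all_boot all_order all_algebra.
From mathcomp Require Import ring lra.
Set Implicit Arguments. Unset Strict Implicit. Unset Printing Implicit Defensive.
Import Order.TTheory GRing.Theory Num.Theory.
Local Open Scope ring_scope.

Section FourierMotzkin.
Variables (R : realFieldType) (T : finType).

Local Notation constraint := ({ffun T -> R} * R)%type.

Definition satisfies (y : T -> R) (c : constraint) : bool :=
  \sum_t c.1 t * y t <= c.2.

Inductive derivable (cs : seq constraint) : constraint -> Prop :=
| derivable_mem c : c \in cs -> derivable cs c
| derivable_add c d : derivable cs c -> derivable cs d ->
    derivable cs ([ffun t => c.1 t + d.1 t], c.2 + d.2)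
| derivable_scale l c : 0 <= l -> derivable cs c ->
    derivable cs ([ffun t => l * c.1 t], l * c.2).

Lemma derivable_ext cs (c d : constraint) :
  derivable cs c -> (forall t, c.1 t = d.1 t) -> c.2 = d.2 -> derivable cs d.
Proof.
case: c d => [a b] [a' b'] dc /= aa' <-.
by rewrite (_ : a' = a) //; apply/ffunP => t; rewrite aa'.
Qed.

Lemma derivable_trans cs ds c :
  (forall d, d \in ds -> derivable cs d) -> derivable ds c -> derivable cs c.
Proof.
move=> dsP; elim=> {c} [c /dsP //|c d _ ? _ ?|l c ? _ ?].
- exact: derivable_add.
- exact: derivable_scale.
Qed.

Lemma exists_between (ls us : seq R) :
  (forall l u, l \in ls -> u \in us -> l <= u) ->
  exists t, (forall l, l \in ls -> l <= t) /\ (forall u, u \in us -> t <= u).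
Proof.
elim: ls => [|l ls IH] lu.
  elim: us {lu} => [|u us [t [_ tu]]]; first by exists 0.
  exists (Num.min u t); split=> // u'; rewrite inE => /predU1P[->|/tu].
    by rewrite ge_min lexx.
  by rewrite ge_min => ->; rewrite orbT.
have [t [lt tu]] : exists t, (forall l, l \in ls -> l <= t) /\
                             (forall u, u \in us -> t <= u).
  by apply: IH => l' u hl hu; apply: lu; rewrite ?inE ?hl ?orbT.
exists (Num.max l t); split=> [l'|u hu].
  by rewrite inE le_max => /predU1P[->|/lt ->]; rewrite ?lexx ?orbT.
by rewrite ge_max tu // andbT lu // mem_head.
Qed.

Section Elimination.
Variable s : T.

Definition eliminate (p q : constraint) : constraint :=
  ([ffun t => p.1 s * q.1 t - q.1 s * p.1 t], p.1 s * q.2 - q.1 s * p.2).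

Definition elim_system (cs : seq constraint) : seq constraint :=
  [seq c : constraint <- cs | c.1 s == 0] ++
  [seq eliminate p q | p <- [seq c : constraint <- cs | 0 < c.1 s],
                       q <- [seq c : constraint <- cs | c.1 s < 0]].

Lemma elim_systemP (cs : seq constraint) c : c \in elim_system cs ->
  c \in cs /\ c.1 s = 0 \/
  exists p q, [/\ p \in cs, 0 < p.1 s, q \in cs, q.1 s < 0 & c = eliminate p q].
Proof.
rewrite mem_cat mem_filter => /orP[/andP[/eqP c0 cs_c]|]; first by left.
case/allpairsP => -[p q] /=; rewrite !mem_filter => -[/andP[p0 pc] /andP[q0 qc] ->].
by right; exists p, q.
Qed.

Lemma elim_system_support (S : {set T}) (cs : seq constraint) :
    (forall c t, c \in cs -> t \notin S -> c.1 t = 0) ->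
  forall c t, c \in elim_system cs -> t \notin S :\ s -> c.1 t = 0.
Proof.
move=> supp c t /elim_systemP[[cs_c c0]|[p [q [pc _ qc _ ->]]]];
  rewrite !inE negb_and negbK => /orP[/eqP->|tS] //; rewrite ?ffunE.
- exact: supp.
- by rewrite mulrC subrr.
- by rewrite (supp p t) ?(supp q t) // !mulr0 subrr.
Qed.

Lemma derivable_elim_system (cs : seq constraint) c :
  c \in elim_system cs -> derivable cs c.
Proof.
case/elim_systemP=> [[cs_c _]|[p [q [pc p0 qc q0 ->]]]]; first exact: derivable_mem.
have dq := derivable_scale (ltW p0) (derivable_mem qc).
have dp : derivable cs ([ffun t => - q.1 s * p.1 t], - q.1 s * p.2).
  by apply: derivable_scale (derivable_mem pc); rewrite oppr_ge0 ltW.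
by apply: derivable_ext (derivable_add dq dp) _ _ => [t|]; rewrite /= ?ffunE mulNr.
Qed.

Definition rest_sum (y : T -> R) (c : constraint) : R :=
  \sum_(t | t != s) c.1 t * y t.

Definition tight_value (y : T -> R) (c : constraint) : R :=
  (c.2 - rest_sum y c) / c.1 s.

Lemma sum_coefE y (c : constraint) :
  \sum_t c.1 t * y t = c.1 s * y s + rest_sum y c.
Proof. by rewrite (bigD1 s). Qed.

Lemma satisfies_update y tau c :
  satisfies (fun t => if t == s then tau else y t) c =
  (c.1 s * tau + rest_sum y c <= c.2).
Proof.
rewrite /satisfies sum_coefE eqxx; congr (_ + _ <= _).
by apply: eq_bigr => t /negbTE ->.
Qed.

Lemma tight_value_eliminate y p q : satisfies y (eliminate p q) ->
  0 < p.1 s -> q.1 s < 0 -> tight_value y q <= tight_value y p.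
Proof.
rewrite /satisfies sum_coefE.
have -> : (eliminate p q).1 s = 0 by rewrite ffunE mulrC subrr.
rewrite mul0r add0r.
have -> : rest_sum y (eliminate p q) = p.1 s * rest_sum y q - q.1 s * rest_sum y p.
  rewrite /rest_sum !mulr_sumr -sumrB; apply: eq_bigr => t _; rewrite ffunE; ring.
rewrite /= => h p0 q0; rewrite /tight_value ler_ndivrMr // mulrAC ler_pdivrMr //; lra.
Qed.

Lemma satisfies_lift (cs : seq constraint) y :
    (forall c, c \in elim_system cs -> satisfies y c) ->
  exists y', forall c, c \in cs -> satisfies y' c.
Proof.
move=> sat_y.
set Ps := [seq c : constraint <- cs | 0 < c.1 s].
set Ns := [seq c : constraint <- cs | c.1 s < 0].
have sep l u : l \in map (tight_value y) Ns -> u \in map (tight_value y) Ps -> l <= u.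
  case/mapP=> q qN -> /mapP[p pP ->].
  move: (qN) (pP); rewrite !mem_filter => /andP[q0 _] /andP[p0 _].
  apply: tight_value_eliminate p0 q0; apply: sat_y.
  by rewrite mem_cat; apply/orP; right; apply/allpairsP; exists (p, q).
have [tau [lo up]] := exists_between sep.
exists (fun t => if t == s then tau else y t) => c cs_c; rewrite satisfies_update.
case: (ltrgtP (c.1 s) 0) => c0.
- have : tight_value y c <= tau by apply/lo/map_f; rewrite mem_filter c0.
  rewrite /tight_value ler_ndivrMr // => h; lra.
- have : tau <= tight_value y c by apply/up/map_f; rewrite mem_filter c0.
  rewrite /tight_value ler_pdivlMr // => h; lra.
- have : satisfies y c by apply: sat_y; rewrite mem_cat mem_filter c0 eqxx cs_c.
  by rewrite /satisfies sum_coefE c0 !mul0r.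
Qed.

End Elimination.

Theorem fourier_motzkin (S : {set T}) (cs : seq constraint) :
    (forall c t, c \in cs -> t \notin S -> c.1 t = 0) ->
  (exists y, forall c, c \in cs -> satisfies y c) \/
  (exists2 c, derivable cs c & (forall t, c.1 t = 0) /\ c.2 < 0).
Proof.
move: {2}#|S| (erefl #|S|) => n; elim: n S cs => [|n IH] S cs cardS supp.
  have coef0 c t : c \in cs -> c.1 t = 0.
    by move=> cs_c; apply: supp; rewrite // (cards0_eq cardS) inE.
  have [nonneg|] := boolP (all (fun c : constraint => 0 <= c.2) cs).
    left; exists (fun _ => 0) => c cs_c; rewrite /satisfies big1 ?(allP nonneg) //.
    by move=> t _; rewrite mulr0.
  rewrite -has_predC => /hasP[c cs_c /=]; rewrite -ltNge => c_neg.
  by right; exists c; [exact: derivable_mem | split=> // t; exact: coef0].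
have [s Ss] : exists s, s \in S by apply/set0Pn; rewrite -cards_eq0 cardS.
have cardSs : #|S :\ s| = n by move: cardS; rewrite (cardsD1 s) Ss => -[].
have [[y sat_y]|[c dc contra]] := IH _ _ cardSs (elim_system_support supp).
  by left; exact: satisfies_lift sat_y.
by right; exists c => //; apply: derivable_trans dc; exact: derivable_elim_system.
Qed.

Section Farkas.
Variables (I : finType) (a : I -> T -> R) (b : I -> R).

Let system : seq constraint := [seq ([ffun t => a i t], b i) | i <- enum I].

Lemma sum_delta (F : I -> R) i : \sum_j (j == i)%:R * F j = F i.
Proof.
rewrite (bigD1 i) //= eqxx mul1r big1 ?addr0 // => j /negbTE ->.
by rewrite mul0r.
Qed.

Lemma derivable_combination c : derivable system c ->
  exists lam : I -> R, [/\ forall i, 0 <= lam i,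
    forall t, \sum_i lam i * a i t = c.1 t & \sum_i lam i * b i = c.2].
Proof.
elim=> {c} [c|c d _ [l [l0 la lb]] _ [l' [l'0 l'a l'b]]|r c r0 _ [l [l0 la lb]]].
- case/mapP=> i _ ->; exists (fun j => (j == i)%:R); split=> [j|t|] /=.
  + exact: ler0n.
  + by rewrite sum_delta ffunE.
  + by rewrite sum_delta.
- exists (fun i => l i + l' i); split=> [i|t|] /=.
  + exact: addr_ge0.
  + by rewrite ffunE -la -l'a -big_split; apply: eq_bigr => i _; rewrite mulrDl.
  + by rewrite -lb -l'b -big_split; apply: eq_bigr => i _; rewrite mulrDl.
- exists (fun i => r * l i); split=> [i|t|] /=.
  + exact: mulr_ge0.
  + by rewrite ffunE -la mulr_sumr; apply: eq_bigr => i _; rewrite mulrA.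
  + by rewrite -lb mulr_sumr; apply: eq_bigr => i _; rewrite mulrA.
Qed.

Theorem farkas :
  (exists y, forall i, \sum_t a i t * y t <= b i) \/
  (exists lam : I -> R, [/\ forall i, 0 <= lam i,
     forall t, \sum_i lam i * a i t = 0 & \sum_i lam i * b i < 0]).
Proof.
have no_support c t : c \in system -> t \notin [set: T] -> c.1 t = 0.
  by rewrite inE.
have [[y sat_y]|[c dc [c0 c_neg]]] := fourier_motzkin no_support.
  left; exists y => i; have := sat_y _ (map_f _ (mem_enum _ i)).
  by rewrite /satisfies; under eq_bigr do rewrite ffunE.
have [lam [lam0 lam_a lam_b]] := derivable_combination dc.
by right; exists lam; split=> // [t|]; rewrite ?lam_a ?lam_b.
Qed.

End Farkas.

End FourierMotzkin.

Lemma sum_clip_ge1 (R : realFieldType) (I : finType) (D : pred I) (mu : I -> R) nu :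
    0 < nu -> (forall i, 0 <= mu i) -> nu <= \sum_(i | D i) mu i ->
  1 <= \sum_(i | D i) Num.min (mu i / nu) 1.
Proof.
move=> nu_gt0 mu_ge0 nu_le.
have clip_ge0 i : 0 <= Num.min (mu i / nu) 1.
  by rewrite le_min ler01 andbT divr_ge0 // ltW.
have [i /andP[Di big_i]|small] := pickP (fun i => D i && (1 <= mu i / nu)).
  rewrite (bigD1 i) //= (min_r big_i) lerDl.
  by apply: sumr_ge0 => j _.
rewrite (eq_bigr (fun i => mu i / nu)) => [|i Di]; last first.
  by rewrite min_l // ltW // ltNge; move: (small i); rewrite Di => /negbT.
by rewrite -mulr_suml ler_pdivlMr // mul1r.
Qed.

Section PathPacking.
Variables (R : realFieldType) (X : finType) (E : {set X}) (S : eqType).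
Variables (Ps : seq S) (uses : S -> pred X) (x : X -> R).

Definition path_packing (g : S -> R) : Prop :=
  [/\ forall e, e \in E -> \sum_(P <- Ps | uses P e) g P <= x e,
      1 <= \sum_(P <- Ps) g P &
      forall P, P \in Ps -> 0 <= g P].

Definition path_cover (z : X -> R) : Prop :=
  (forall e, e \in E -> 0 <= z e <= 1) /\
  (forall P, P \in Ps -> 1 <= \sum_(e in E | uses P e) z e).

Lemma path_cover_cost_ge1 g z :
  path_packing g -> path_cover z -> 1 <= \sum_(e in E) z e * x e.
Proof.
case=> cap demand g_ge0 [z01 zP].
have swap : \sum_(e in E) z e * \sum_(P <- Ps | uses P e) g P =
            \sum_(P <- Ps) g P * \sum_(e in E | uses P e) z e.
  under eq_bigr do rewrite mulr_sumr.
  rewrite (exchange_big_dep xpredT) //=; apply: eq_bigr => P _.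
  by rewrite mulr_sumr; apply: eq_bigr => e _; rewrite mulrC.
apply: le_trans (_ : \sum_(e in E) z e * \sum_(P <- Ps | uses P e) g P <= _).
  rewrite swap; apply: le_trans demand _; rewrite !big_seq; apply: ler_sum => P Ps_P.
  by rewrite -[leLHS]mulr1 ler_wpM2l ?g_ge0 ?zP.
by apply: ler_sum => e Ee; rewrite ler_wpM2l ?cap //; case/andP: (z01 e Ee).
Qed.

Hypothesis Ps_uniq : uniq Ps.
Hypothesis x_ge0 : forall e, e \in E -> 0 <= x e.

Let m := size Ps.
Let path (j : 'I_m) : S := tnth (in_tuple Ps) j.
Let row := ('I_m + X + unit)%type.

(* The packing LP in the variables y_j, one per path: the rows are
   [- y_i <= 0], the load of each edge [e] (the trivial row [0 <= 0] when e is
   not in E), and [- sum_j y_j <= -1]. *)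

Let coef (c : row) (j : 'I_m) : R :=
  match c with
  | inl (inl i) => - (j == i)%:R
  | inl (inr e) => ((e \in E) && uses (path j) e)%:R
  | inr _ => -1
  end.

Let rhs (c : row) : R :=
  match c with
  | inl (inl _) => 0
  | inl (inr e) => if e \in E then x e else 0
  | inr _ => -1
  end.

Lemma sum_row (F : row -> R) :
  \sum_c F c = \sum_i F (inl (inl i)) + \sum_e F (inl (inr e)) + F (inr tt).
Proof. by rewrite !big_sumType (big_pred1 tt) // => -[]. Qed.

Lemma path_packing_of_solution y :
  (forall c, \sum_j coef c j * y j <= rhs c) -> exists g, path_packing g.
Proof.
move=> sat_y.
pose g P := \sum_(j | path j == P) y j.
have path_inj : injective path by apply/tuple_uniqP.
have g_path i : g (path i) = y i.
  by apply: big_pred1 => j; rewrite /= (inj_eq path_inj).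
have sum_paths (D : pred S) : \sum_(P <- Ps | D P) g P = \sum_(j | D (path j)) y j.
  by rewrite big_tnth; apply: eq_bigr => j _; rewrite g_path.
exists g; split=> [e Ee|| P /seq_tnthP[i ->]].
- have := sat_y (inl (inr e)); rewrite /= Ee.
  under eq_bigr do rewrite mulr_natl mulrb.
  by rewrite -big_mkcond sum_paths.
- move: (sat_y (inr tt)) => /=; rewrite sum_paths.
  by under eq_bigr do rewrite mulN1r; rewrite sumrN lerN2.
- move: (sat_y (inl (inl i))) => /=.
  rewrite g_path (bigD1 i) //= big1 => [|j /negbTE ji].
    by rewrite eqxx mulN1r addr0 oppr_le0.
  by rewrite ji oppr0 mul0r.
Qed.

Lemma no_infeasibility_certificate lam :
    (forall z, path_cover z -> 1 <= \sum_(e in E) z e * x e) ->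
    (forall c, 0 <= lam c) -> (forall j, \sum_c lam c * coef c j = 0) ->
  ~ \sum_c lam c * rhs c < 0.
Proof.
move=> cover_cost lam_ge0 lam_coef lam_rhs.
pose mu e := lam (inl (inr e)); pose nu := lam (inr tt).
have mu_ge0 e : 0 <= mu e by apply: lam_ge0.
have cost_lt : \sum_(e in E) mu e * x e < nu.
  move: lam_rhs; rewrite sum_row big1 ?add0r => [|i _]; last by rewrite mulr0.
  rewrite (eq_bigr (fun e => if e \in E then mu e * x e else 0)) => [|e _] /=.
    by rewrite -big_mkcond mulrN1 subr_lt0.
  by case: ifP; rewrite ?mulr0.
have nu_gt0 : 0 < nu.
  apply: le_lt_trans cost_lt; apply: sumr_ge0 => e Ee.
  by rewrite mulr_ge0 ?x_ge0.
have path_load j : nu <= \sum_(e in E | uses (path j) e) mu e.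
  move: (lam_coef j); rewrite sum_row (bigD1 j) //=.
  rewrite big1 => [|i /negbTE ij]; last by rewrite eq_sym ij oppr0 mulr0.
  under [X in _ + X + _]eq_bigr do rewrite mulr_natr mulrb.
  rewrite -big_mkcond eqxx mulrN1 addr0 mulrN1 => load.
  by have := lam_ge0 (inl (inl j)); move: load; rewrite /nu; lra.
pose z e := Num.min (mu e / nu) 1.
have cover_z : path_cover z.
  split=> [e _|P /seq_tnthP[j ->]]; last exact: sum_clip_ge1.
  by rewrite ge_min lexx orbT le_min ler01 andbT divr_ge0 // ltW.
have : \sum_(e in E) z e * x e < 1.
  apply: le_lt_trans (_ : \sum_(e in E) mu e / nu * x e < 1).
    by apply: ler_sum => e Ee; rewrite ler_wpM2r ?x_ge0 // ge_min lexx.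
  under eq_bigr do rewrite mulrAC.
  by rewrite -mulr_suml ltr_pdivrMr // mul1r.
by rewrite ltNge cover_cost.
Qed.

Theorem exists_path_packing :
    (forall z, path_cover z -> 1 <= \sum_(e in E) z e * x e) ->
  exists g, path_packing g.
Proof.
move=> cover_cost.
have [[y /path_packing_of_solution //]|[lam [lam_ge0 lam_coef lam_rhs]]] :=
  farkas coef rhs.
by case: (no_infeasibility_certificate cover_cost lam_ge0 lam_coef lam_rhs).
Qed.

End PathPacking.

Section Spanner.
Variables (R : realFieldType) (V : finType) (E : {set V * V}) (k : R).
Variable x : V * V -> R.

Local Notation paths uv := (stretch_paths E k uv.1 uv.2).
Local Notation in_path := (fun (P : seq V) e => e \in pedges P).

Lemma stretch_paths_uniq u v : uniq (stretch_paths E k u v).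
Proof. by rewrite filter_uniq // undup_uniq. Qed.

Lemma sum_pedges u v P (z : V * V -> R) : P \in stretch_paths E k u v ->
  \sum_(e <- pedges P) z e = \sum_(e in E | e \in pedges P) z e.
Proof.
rewrite mem_filter => /andP[/andP[/and5P[_ _ _ P_uniq /allP P_E] _] _].
rewrite big_uniq ?zip_uniql //; apply: eq_bigl => e.
by apply/idP/andP => [eP|[]//]; split=> //; apply: P_E.
Qed.

Lemma in_ZE uv z : in_Z E k uv.1 uv.2 z <-> path_cover E (paths uv) in_path z.
Proof.
split=> -[z01 zP]; split=> // P P_uv; move: (zP P P_uv);
  by rewrite (sum_pedges _ P_uv).
Qed.

Lemma LP_flow_feasibleE f : LP_flow_feasible E k x f <->
  (forall e, e \in E -> 0 <= x e) /\
  (forall uv, uv \in E -> path_packing E (paths uv) in_path x (f uv)).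
Proof.
split=> [[cap demand x_ge0 f_ge0]|[x_ge0 pack]].
  by split=> // uv Euv; split; auto.
by split=> // uv Euv; case: (pack uv Euv).
Qed.

Lemma LP_spanner_feasible_of_flow f :
  LP_flow_feasible E k x f -> LP_spanner_feasible E k x.
Proof.
case/LP_flow_feasibleE=> x_ge0 pack; split=> // uv Euv z /in_ZE.
exact: path_cover_cost_ge1 (pack uv Euv).
Qed.

Lemma LP_flow_feasible_of_spanner :
  LP_spanner_feasible E k x -> exists f, LP_flow_feasible E k x f.
Proof.
case=> cover_cost x_ge0.
have packs uv : exists g, uv \in E -> path_packing E (paths uv) in_path x g.
  have [Euv|_] := boolP (uv \in E); last by exists (fun _ => 0).
  have [|g pack] := exists_path_packing (uses := in_path)
                      (stretch_paths_uniq uv.1 uv.2) x_ge0.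
    by move=> z /in_ZE; apply: cover_cost.
  by exists g.
have [f pack] := fin_all_exists packs.
by exists f; apply/LP_flow_feasibleE.
Qed.

End Spanner.

Theorem theorem5 (R : realFieldType) (V : finType) (E : {set V * V}) (k : R)
    (x : V * V -> R) :
  LP_spanner_feasible E k x <->
  exists f : V * V -> seq V -> R, LP_flow_feasible E k x f.
Proof.
split; first exact: LP_flow_feasible_of_spanner.
by case=> f; exact: LP_spanner_feasible_of_flow.
Qed.
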